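(* Let $G$ be a $4$-Sachs minimal graph in $\mathfrak{G}_{n,m}$ and let $\mathbf{B}_G$ be a spanning subgraph of $G$ which is a difference graph with bipartition $(U,W)$. Let $\overline{\mathbf{B}_G}$ be the graph obtained from $G$ by deleting all edges of $\mathbf{B}_G$ and then deleting all isolated vertices. If $V(\overline{\mathbf{B}_G})\subseteq U$, then $$\mathbf{a}_4(G)=\mathbf{a}_4(\mathbf{B}_G)+\mathbf{a}_4(\overline{\mathbf{B}_G})+\sum_{e_i\in E(\overline{\mathbf{B}_G})}\epsilon(\mathbf{B}_G\setminus V(e_i))-2\sum_{\{e_p,e_q\}}n_W(e_p,e_q),$$ where the first sum is over all edges $e_i$ of $\overline{\mathbf{B}_G}$ and the second over all pairs of distinct adjacent edges $e_p,e_q$ of $\overline{\mathbf{B}_G}$.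
   Context: $\mathfrak{G}_{n,m}$ is the set of connected simple graphs with $n$ vertices and $m$ edges. $\mathbf{a}_4(G)$ is the coefficient of $\lambda^{\nu(G)-4}$ in $\det(\lambda\mathbf{I}-\mathbf{A}(G))$ (equivalently, number of 2-matchings minus twice the number of 4-cycles). $G\in\mathfrak{G}_{n,m}$ is $4$-Sachs minimal if $\mathbf{a}_4(G)=\min\{\mathbf{a}_4(H):H\in\mathfrak{G}_{n,m}\}$. A difference graph is a bipartite graph in which the neighborhoods of the vertices of one part are linearly ordered by inclusion. $\epsilon(H)$ is the number of edges of $H$; $V(e)$ is the set of endpoints of an edge $e$; $\mathbf{B}_G\setminus V(e_i)$ is obtained by deleting these two vertices and incident edges. For adjacent edges $e_p=xx_p$, $e_q=xx_q$ of $\overline{\mathbf{B}_G}$, $n_W(e_p,e_q)=|\{w\in W: wx_p\in E(G),\ wx_q\in E(G)\}|$. *)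

(* Simple graphs on a finite vertex type T, given by their
   edge set: a set of 2-element subsets of T. *)
From mathcomp Require Import all_boot all_order all_algebra.
Set Implicit Arguments. Unset Strict Implicit. Unset Printing Implicit Defensive.
Import Order.TTheory GRing.Theory Num.Theory.

Section Graphs.
Variable T : finType.
Implicit Types (E : {set {set T}}) (U W : {set T}).

Definition simple_graph E : Prop := forall e, e \in E -> #|e| = 2.

Definition adjrel E : rel T := fun x y => [set x; y] \in E.

Definition connected_graph E : Prop := forall x y : T, connect (adjrel E) x y.

Definition num_2matchings E : nat :=
  #|[set P : {set {set T}} | (P \subset E) &&
      [exists e1, exists e2, (P == [set e1; e2]) && (e1 != e2) && [disjoint e1 & e2]]]|.

(* number of 4-cycles (as subgraphs: edge sets of 4-cycles) *)
Definition is_4cycle (C : {set {set T}}) : bool :=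
  [exists a : T, exists b : T, exists c : T, exists d : T,
     uniq [:: a; b; c; d] &&
     (C == [set [set a; b]; [set b; c]; [set c; d]; [set d; a]])].

Definition num_4cycles E : nat :=
  #|[set C : {set {set T}} | (C \subset E) && is_4cycle C]|.

Definition a4 E : int := ((num_2matchings E)%:Z - 2 * (num_4cycles E)%:Z)%R.

(* 4-Sachs minimal in G_{n,m}: n = #|T|, m = #|E| *)
Definition sachs4_minimal E : Prop :=
  forall E' : {set {set T}}, simple_graph E' -> connected_graph E' ->
    #|E'| = #|E| -> (a4 E <= a4 E')%R.

Definition nbhd E (x : T) : {set T} := [set y | [set x; y] \in E].

Definition nested_on E (X : {set T}) : Prop :=
  forall x1 x2, x1 \in X -> x2 \in X ->
    (nbhd E x1 \subset nbhd E x2) \/ (nbhd E x2 \subset nbhd E x1).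

Definition difference_graph E U W : Prop :=
  [/\ [disjoint U & W], U :|: W = [set: T],
      (forall e, e \in E -> #|e :&: U| = 1 /\ #|e :&: W| = 1)
    & nested_on E U \/ nested_on E W].

(* vertex set of the graph with edge set E after deleting isolated vertices *)
Definition vertices E : {set T} := cover E.

Definition eps_del E (e : {set T}) : nat := #|[set f in E | [disjoint f & e]]|.

Definition adjacent_edges (e1 e2 : {set T}) : bool :=
  (e1 != e2) && ~~ [disjoint e1 & e2].

(* n_W(e_p, e_q) for adjacent edges e_p = x x_p, e_q = x x_q in G (edge set E):
   x_p is the endpoint of e_p not in e_q, x_q that of e_q not in e_p *)
Definition nW E W (ep eq : {set T}) : nat :=
  #|[set w in W | [forall xp in ep :\: eq, [set w; xp] \in E] &&
                  [forall xq in eq :\: ep, [set w; xq] \in E]]|.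

End Graphs.

From mathcomp Require Import all_boot all_order all_algebra.
From mathcomp Require Import ring.
Import Order.TTheory GRing.Theory Num.Theory.
Set Implicit Arguments. Unset Strict Implicit. Unset Printing Implicit Defensive.

(* Both terms of a_4 count edge sets of small subgraphs (2-matchings and
   4-cycles), and each such subgraph P of G lies inside B_G, lies inside the
   complement R = E \ B_G, or straddles the two.  A straddling 2-matching is an
   edge of R together with a disjoint edge of B_G, which gives the eps-sum.
   Since every edge of R has both ends in U while every edge of B_G joins U to
   W = ~U, a straddling 4-cycle has exactly one vertex w in W: its two edges
   at the opposite vertex x are adjacent edges xy, xz of R, and w is a common
   neighbour of y and z in W, which is what n_W counts. *)

Section SetFacts.
Variable T : finType.

Lemma setC_of_partition (U W : {set T}) : [disjoint U & W] -> U :|: W = setT -> W = ~: U.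
Proof.
move=> dUW cUW; apply/setP => v; rewrite inE; apply/idP/idP => [vW | vNU].
  by apply: contraTN vW => vU; rewrite (disjointFr dUW vU).
have : v \in U :|: W by rewrite cUW inE.
by rewrite inE (negbTE vNU).
Qed.

Lemma setD_pair_fst (a b : T) (S : {set T}) :
  a \notin S -> b \in S -> [set a; b] :\: S = [set a].
Proof.
move=> aS bS; apply/setP => v; rewrite !inE.
case: (v =P a) => [-> | _]; first by rewrite aS.
by case: (v =P b) => [-> |]; rewrite ?bS ?andbF.
Qed.

Lemma setD_pair_snd (a b : T) (S : {set T}) :
  a \in S -> b \notin S -> [set a; b] :\: S = [set b].
Proof. by move=> aS bS; rewrite setUC setD_pair_fst. Qed.

Lemma setD_path2 (x y z : T) : y != x -> x != z -> y != z ->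
  [set y; x] :\: [set x; z] = [set y] /\ [set x; z] :\: [set y; x] = [set z].
Proof.
move=> yx xz yz; split.
  by rewrite setD_pair_fst ?set21 // !inE negb_or yx yz.
by rewrite setD_pair_snd ?set22 // !inE negb_or ![z == _]eq_sym yz xz.
Qed.

Lemma set2_rank_inj (a b c d : T) :
  (enum_rank a < enum_rank b)%N -> (enum_rank c < enum_rank d)%N ->
  [set a; b] = [set c; d] -> a = c /\ b = d.
Proof.
move=> ab cd eq_ab_cd.
have /set2P [ac | ad] : a \in [set c; d] by rewrite -eq_ab_cd set21.
- have /set2P [bc | bd] : b \in [set c; d] by rewrite -eq_ab_cd set22.
  + by move: ab; rewrite ac bc ltnn.
  + by [].
- have /set2P [bc | bd] : b \in [set c; d] by rewrite -eq_ab_cd set22.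
  + by move: cd; rewrite -ad -bc ltnNge (ltnW ab).
  + by move: ab; rewrite ad bd ltnn.
Qed.

Lemma adjacent_edgesC (e f : {set T}) : adjacent_edges e f = adjacent_edges f e.
Proof. by rewrite /adjacent_edges eq_sym disjoint_sym. Qed.

Lemma adjacent_edgesP (ep eq : {set T}) :
  #|ep| = 2 -> #|eq| = 2 -> adjacent_edges ep eq ->
  exists x y z, [/\ y != x, x != z, y != z, ep = [set y; x] & eq = [set x; z]].
Proof.
move=> /eqP /cards2P [a [b [ab ->]]] /eqP /cards2P [c [d [cd ->]]] /andP [neq meet].
have /set0Pn [x] : [set a; b] :&: [set c; d] != set0 by rewrite setI_eq0.
rewrite inE => /andP [/set2P xab /set2P xcd].
have [y [yx ep_yx]] : exists y, y != x /\ [set a; b] = [set y; x].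
  by case: xab => ->; [exists b; rewrite eq_sym setUC | exists a].
have [z [xz eq_xz]] : exists z, x != z /\ [set c; d] = [set x; z].
  by case: xcd => ->; [exists d | exists c; rewrite eq_sym setUC].
exists x, y, z; split=> //; apply: contraNneq neq => yz.
by rewrite ep_yx eq_xz yz setUC.
Qed.

Definition cycle4 (a b c d : T) : {set {set T}} :=
  [set [set a; b]; [set b; c]; [set c; d]; [set d; a]].

Lemma cycle4_rot (a b c d : T) : cycle4 a b c d = cycle4 b c d a.
Proof. by apply/setP => e; rewrite !inE [in RHS]orbC !orbA. Qed.

End SetFacts.

Section Straddling.
Variable T : finType.
Implicit Types (E B P : {set {set T}}) (pr : pred {set {set T}}).

Definition subgraphs pr E : {set {set {set T}}} :=
  [set P : {set {set T}} | (P \subset E) && pr P].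

Definition straddling pr E B : {set {set {set T}}} :=
  [set P : {set {set T}} | [&& P \subset E, pr P, ~~ (P \subset B) & ~~ (P \subset E :\: B)]].

Lemma card_subgraphs_split pr E B :
  B \subset E -> (forall P, pr P -> P != set0) ->
  #|subgraphs pr E| =
    #|subgraphs pr B| + #|subgraphs pr (E :\: B)| + #|straddling pr E B|.
Proof.
move=> sBE pr_neq0.
rewrite -(cardsID [set P : {set {set T}} | P \subset B]).
rewrite -(cardsID [set P : {set {set T}} | P \subset E :\: B] (_ :\: _)) addnA.
congr (_ + _ + _); apply: eq_card => P; rewrite !inE.
- by case sPB: (P \subset B); rewrite ?andbF // andbT (subset_trans sPB sBE).
- case sPR: (P \subset E :\: B); rewrite ?andbF // andbT.
  rewrite (subset_trans sPR (subsetDl _ _)) /=.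
  case prP: (pr P); rewrite ?andbF // andbT.
  have /set0Pn [e eP] := pr_neq0 P prP.
  apply: contraT => /negbNE sPB.
  by have := subsetP sPR e eP; rewrite inE (subsetP sPB e eP).
- by case: (P \subset E) (pr P) (P \subset B) (P \subset E :\: B) => [] [] [] [].
Qed.

Definition is_2matching P : bool :=
  [exists e1, exists e2, (P == [set e1; e2]) && (e1 != e2) && [disjoint e1 & e2]].

Definition disjoint_pairs E B : {set {set T} * {set T}} :=
  [set p | [&& p.1 \in E :\: B, p.2 \in B & [disjoint p.2 & p.1]]].

Lemma sum_eps_del E B : \sum_(e in E :\: B) eps_del B e = #|disjoint_pairs E B|.
Proof.
transitivity (\sum_(e in E :\: B) \sum_(f | (f \in B) && [disjoint f & e]) 1).
  by apply: eq_bigr => e _; rewrite /eps_del -sum1_card; apply: eq_bigl => f; rewrite inE.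
by rewrite pair_big_dep sum1dep_card.
Qed.

Lemma straddling_2matchingsE E B : B \subset E ->
  straddling is_2matching E B = [set [set p.1; p.2] | p in disjoint_pairs E B].
Proof.
move=> sBE; apply/setP => P; rewrite inE; apply/idP/imsetP.
- case/and4P => sPE /existsP [e1 /existsP [e2 /andP [/andP [/eqP dP _] dis]]] nB nR.
  have [e1E e2E] : e1 \in E /\ e2 \in E by rewrite !(subsetP sPE) // dP (set21, set22).
  case e1B: (e1 \in B).
  + have e2R : e2 \in E :\: B.
      rewrite inE e2E andbT; apply: contra nB => e2B.
      by apply/subsetP => f; rewrite dP => /set2P [] ->.
    exists (e2, e1); last by rewrite dP setUC.
    by rewrite inE /= e2R e1B dis.
  + have e2B : e2 \in B.
      apply: contraNT nR => e2B; apply/subsetP => f; rewrite dP => /set2P [] ->;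
        by rewrite inE ?e1B ?e1E ?e2E ?e2B.
    exists (e1, e2) => //.
    by rewrite !inE /= e1B e1E e2B disjoint_sym dis.
- case=> -[e f]; rewrite inE /= => /and3P [eR fB dis] ->.
  have /setDP [eE eNB] := eR.
  apply/and4P; split.
  + by apply/subsetP => g /set2P [] ->; rewrite ?eE ?(subsetP sBE f fB).
  + apply/existsP; exists e; apply/existsP; exists f; rewrite eqxx disjoint_sym dis andbT.
    by apply: contraNneq eNB => ->.
  + by apply/subsetP => /(_ e (set21 _ _)); apply/negP.
  + by apply/subsetP => /(_ f (set22 _ _)); rewrite inE fB.
Qed.

Lemma card_straddling_2matchings E B : B \subset E ->
  #|straddling is_2matching E B| = \sum_(e in E :\: B) eps_del B e.
Proof.
move=> sBE; rewrite sum_eps_del straddling_2matchingsE //.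
apply: card_in_imset => -[a b] [c d]; rewrite !inE /=.
move=> /and3P [/andP [aNB _] bB _] /and3P [/andP [cNB _] dB _] eq_ab_cd.
have /set2P [ac | ad] : a \in [set c; d] by rewrite -eq_ab_cd set21.
- have /set2P [bc | bd] : b \in [set c; d] by rewrite -eq_ab_cd set22.
  + by move: bB; rewrite bc (negbTE cNB).
  + by rewrite ac bd.
- by move: aNB; rewrite ad dB.
Qed.

Lemma num_2matchings_split E B : B \subset E ->
  num_2matchings E =
    num_2matchings B + num_2matchings (E :\: B) + \sum_(e in E :\: B) eps_del B e.
Proof.
move=> sBE; rewrite -card_straddling_2matchings //.
apply: (card_subgraphs_split sBE) => P.
case/existsP=> e1 /existsP [e2 /andP [/andP [/eqP -> _] _]].
by apply/set0Pn; exists e1; rewrite set21.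
Qed.

End Straddling.

Section Squares.
Variables (T : finType) (E B : {set {set T}}) (U : {set T}).
Hypotheses (E_simple : simple_graph E) (sBE : B \subset E)
  (B_cross : forall e, e \in B -> #|e :&: U| = 1)
  (rest_in_U : vertices (E :\: B) \subset U).

Lemma rest_edge_in_U e v : e \in E :\: B -> v \in e -> v \in U.
Proof. by move=> eR ve; apply: (subsetP rest_in_U); apply/bigcupP; exists e. Qed.

Lemma B_edge_cross x y : x != y -> [set x; y] \in B -> (x \in U) != (y \in U).
Proof.
move=> xy /B_cross; case xU: (x \in U); case yU: (y \in U) => //=.
- by rewrite (setIidPl _) ?cards2 ?xy //; apply/subsetP => v /set2P [] ->.
- rewrite (disjoint_setI0 _) ?cards0 // disjoints_subset.
  by apply/subsetP => v /set2P [] ->; rewrite inE ?xU ?yU.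
Qed.

Lemma edge_in_rest x y : x != y -> [set x; y] \in E -> x \in U -> y \in U ->
  [set x; y] \in E :\: B.
Proof.
move=> xy xyE xU yU; rewrite inE xyE andbT.
by apply: contraTN isT => /(B_edge_cross xy); rewrite xU yU.
Qed.

Lemma edge_in_B x y : [set x; y] \in E -> x \notin U -> [set x; y] \in B.
Proof.
move=> xyE; apply: contraNT => xyB.
by apply: (rest_edge_in_U _ (set21 x y)); rewrite inE xyB xyE.
Qed.

Lemma edge_outside_U (P : {set {set T}}) : P \subset E -> ~~ (P \subset E :\: B) ->
  exists2 v, v \in vertices P & v \notin U.
Proof.
move=> sPE; case/subsetPn => f fP fNR.
have fB : f \in B by move: fNR; rewrite inE (subsetP sPE f fP) andbT negbK.
have [v vf vU] : exists2 v, v \in f & v \notin U.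
  apply/exists_inP; rewrite -negb_forall_in; apply: contraTN isT => /forall_inP /subsetP fU.
  by have := B_cross fB; rewrite (setIidPl fU) (E_simple (subsetP sBE f fB)).
by exists v => //; apply/bigcupP; exists f.
Qed.

(* t = (ep, eq, w) encodes a term of the n_W-sum: adjacent edges ep, eq of the
   rest, listed once thanks to the enum_rank order, and a vertex w outside U
   joined to the free ends of both. *)
Definition corner (t : {set T} * {set T} * T) : bool :=
  [&& t.1.1 \in E :\: B, t.1.2 \in E :\: B,
      (enum_rank t.1.1 < enum_rank t.1.2)%N & adjacent_edges t.1.1 t.1.2]
  && [&& t.2 \in ~: U, [forall xp in t.1.1 :\: t.1.2, [set t.2; xp] \in E]
       & [forall xq in t.1.2 :\: t.1.1, [set t.2; xq] \in E]].

Lemma sum_nW_card_corners :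
  (\sum_(ep in E :\: B)
     \sum_(eq in E :\: B | (enum_rank ep < enum_rank eq)%N && adjacent_edges ep eq)
       nW E (~: U) ep eq)%N = #|[set t | corner t]|.
Proof.
rewrite pair_big_dep.
transitivity (\sum_(p | [&& p.1 \in E :\: B, p.2 \in E :\: B,
                          (enum_rank p.1 < enum_rank p.2)%N & adjacent_edges p.1 p.2])
   \sum_(w | [&& w \in ~: U, [forall xp in p.1 :\: p.2, [set w; xp] \in E]
               & [forall xq in p.2 :\: p.1, [set w; xq] \in E]]) 1)%N.
  by apply: eq_bigr => p _; rewrite /nW -sum1_card; apply: eq_bigl => w; rewrite inE.
by rewrite pair_big_dep sum1dep_card.
Qed.

Definition square_of (t : {set T} * {set T} * T) : {set {set T}} :=
  [set t.1.1; t.1.2] :|: [set t.2 |: (t.1.1 :\: t.1.2); t.2 |: (t.1.2 :\: t.1.1)].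

Lemma square_ofC ep eq w : square_of (ep, eq, w) = square_of (eq, ep, w).
Proof. by rewrite /square_of /=; congr (_ :|: _); apply: setUC. Qed.

Lemma square_of_path x y z w : y != x -> x != z -> y != z ->
  square_of ([set y; x], [set x; z], w) = cycle4 y x z w.
Proof.
move=> yx xz yz; rewrite /square_of /=; have [-> ->] := setD_path2 yx xz yz.
rewrite /cycle4 [[set z; w]]setUC; apply/setP => e; rewrite !inE.
by rewrite -!orbA; do 2 congr (_ || _); apply: orbC.
Qed.

Lemma cornerP t : corner t -> exists x y z,
  [/\ [/\ y != x, x != z & y != z], [/\ x \in U, y \in U, z \in U & t.2 \notin U] &
      [/\ t.1 = ([set y; x], [set x; z]), square_of t = cycle4 y x z t.2,
          [set t.2; y] \in E & [set t.2; z] \in E]].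
Proof.
case: t => [[ep eq] w]; rewrite /corner /=.
case/andP=> [/and4P [epR eqR _ adj] /and3P [wU /forallP wy /forallP wz]].
have [[epE _] [eqE _]] := (setDP epR, setDP eqR).
have [x [y [z [yx xz yz dep deq]]]] := adjacent_edgesP (E_simple epE) (E_simple eqE) adj.
have [ep_eq eq_ep] : ep :\: eq = [set y] /\ eq :\: ep = [set z].
  by rewrite dep deq; apply: setD_path2.
have U_vertices : [/\ x \in U, y \in U, z \in U & w \notin U].
  split; last by rewrite inE in wU.
  - by apply: (rest_edge_in_U epR); rewrite dep set22.
  - by apply: (rest_edge_in_U epR); rewrite dep set21.
  - by apply: (rest_edge_in_U eqR); rewrite deq set22.
exists x, y, z; split=> //; split; rewrite ?dep ?deq ?square_of_path //.
- by have := wy y; rewrite ep_eq set11.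
- by have := wz z; rewrite eq_ep set11.
Qed.

Lemma corner_of_path x y z w : y != x -> x != z -> y != z -> w \notin U ->
  [set y; x] \in E :\: B -> [set x; z] \in E :\: B -> [set z; w] \in E -> [set w; y] \in E ->
  exists2 t, corner t & square_of t = cycle4 y x z w.
Proof.
move=> yx xz yz wU yxR xzR zwE wyE.
have [yx_xz xz_yx] := setD_path2 yx xz yz.
have adj : adjacent_edges [set y; x] [set x; z].
  rewrite /adjacent_edges -setI_eq0; apply/andP; split.
    by apply: contraNneq yz => eq_yx_xz; move: (set21 y x); rewrite eq_yx_xz !inE (negbTE yx).
  by apply/set0Pn; exists x; rewrite !inE !eqxx orbT.
have joins_y : [forall v in [set y], [set w; v] \in E].
  by apply/forallP => v; apply/implyP => /set1P ->.
have joins_z : [forall v in [set z], [set w; v] \in E].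
  by apply/forallP => v; apply/implyP => /set1P ->; rewrite setUC.
have wNU : w \in ~: U by rewrite inE.
case: (ltngtP (enum_rank [set y; x]) (enum_rank [set x; z]))
  => [lt | gt | /val_inj/enum_rank_inj eq].
- exists ([set y; x], [set x; z], w); last exact: square_of_path.
  by rewrite /corner /= yxR xzR lt adj wNU yx_xz xz_yx joins_y joins_z.
- exists ([set x; z], [set y; x], w); last by rewrite square_ofC square_of_path.
  by rewrite /corner /= yxR xzR gt adjacent_edgesC adj wNU yx_xz xz_yx joins_y joins_z.
- by move: adj; rewrite /adjacent_edges eq eqxx.
Qed.

(* The vertex d outside U forces its neighbours a, c into U; b is in U too,
   since otherwise all four edges would cross and the cycle would lie in B. *)
Lemma cycle4_corner a b c d : uniq [:: a; b; c; d] -> d \notin U ->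
  cycle4 a b c d \subset E -> ~~ (cycle4 a b c d \subset B) ->
  exists2 t, corner t & square_of t = cycle4 a b c d.
Proof.
rewrite /= !inE !negb_or => /and4P [/and3P [ab ac ad] /andP [bc bd] cd _] dU.
have [da dc] : d != a /\ d != c by rewrite ![d == _]eq_sym.
rewrite /cycle4 !subUset !sub1set => /andP [/andP [/andP [abE bcE] cdE] daE] notB.
have dcB : [set d; c] \in B by apply: edge_in_B; rewrite // setUC.
have daB : [set d; a] \in B by apply: edge_in_B.
have cU : c \in U.
  by have := B_edge_cross dc dcB; rewrite (negbTE dU); case: (c \in U).
have aU : a \in U.
  by have := B_edge_cross da daB; rewrite (negbTE dU); case: (a \in U).
have bU : b \in U.
  apply: contraNT notB => bU; rewrite [[set c; d]]setUC daB dcB !andbT.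
  by rewrite [[set a; b]]setUC !edge_in_B // setUC.
by apply: corner_of_path; rewrite ?edge_in_rest.
Qed.

Lemma straddling_4cycle_corner P : P \in straddling (@is_4cycle T) E B ->
  exists2 t, corner t & P = square_of t.
Proof.
rewrite inE => /and4P [sPE c4 notB notR].
case/existsP: c4 => a /existsP [b /existsP [c /existsP [d /andP [un /eqP dP]]]].
rewrite -/(cycle4 a b c d) in dP.
have rotated a' b' c' d' : uniq [:: a'; b'; c'; d'] -> d' \notin U ->
    P = cycle4 a' b' c' d' -> exists2 t, corner t & P = square_of t.
  move=> un' dU' eP; rewrite eP in notB sPE *.
  by have [t ct <-] := cycle4_corner un' dU' sPE notB; exists t.
have [v /bigcupP [f fP vf] vU] := edge_outside_U sPE notR.
have : v \in [set a; b; c; d].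
  move: fP vf; rewrite dP !inE -!orbA.
  by case/or4P => /eqP -> /set2P [] ->; rewrite !eqxx ?orbT.
rewrite !inE -!orbA => /or4P [] /eqP vE; rewrite vE in vU.
- apply: (rotated b c d a) => //; first by rewrite -(rot_uniq 1) in un.
  by rewrite dP cycle4_rot.
- apply: (rotated c d a b) => //; first by rewrite -(rot_uniq 2) in un.
  by rewrite dP 2!cycle4_rot.
- apply: (rotated d a b c) => //; first by rewrite -(rot_uniq 3) in un.
  by rewrite dP 3!cycle4_rot.
- exact: rotated un vU dP.
Qed.

Lemma corner_square_straddling t : corner t -> square_of t \in straddling (@is_4cycle T) E B.
Proof.
move=> ct; have [/and4P [epR eqR _ _] _] := andP ct.
have [x [y [z [[yx xz yz] [xU yU zU wU] [t1 sq wyE wzE]]]]] := cornerP ct.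
move: epR eqR; rewrite t1 /= => yxR xzR.
have [[yxE yxNB] [xzE _]] := (setDP yxR, setDP xzR).
have [wy wx wz] : [/\ t.2 != y, t.2 != x & t.2 != z].
  by split; apply: contraNneq wU => ->.
rewrite inE sq; apply/and4P; split.
- by rewrite /cycle4 !subUset !sub1set yxE xzE wyE [[set z; _]]setUC wzE.
- apply/existsP; exists y; apply/existsP; exists x; apply/existsP; exists z.
  apply/existsP; exists t.2; rewrite eqxx andbT /= !inE !negb_or yx yz xz.
  by rewrite ![_ == t.2]eq_sym wy wx wz.
- by apply: contraNN yxNB => /subsetP; apply; rewrite !inE eqxx.
- apply: contraNN wU => /subsetP /(_ [set t.2; y]) wyR.
  by apply: (rest_edge_in_U (wyR _) (set21 _ _)); rewrite !inE eqxx orbT.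
Qed.

Lemma corner_square_rest t : corner t -> square_of t :&: (E :\: B) = [set t.1.1; t.1.2].
Proof.
case/andP=> /and4P [epR eqR _ _] /and3P [wU _ _].
rewrite /square_of setIUl (setIidPl _); last by apply/subsetP => f /set2P [] ->.
rewrite (disjoint_setI0 _) ?setU0 // disjoints_subset.
apply/subsetP => f /set2P [] -> ; rewrite inE; apply: contraTN wU => fR;
  by rewrite inE negbK (rest_edge_in_U fR (setU11 _ _)).
Qed.

Lemma corner_square_outside_U t f v : corner t ->
  f \in square_of t -> v \in f -> v \notin U -> v = t.2.
Proof.
move=> /cornerP [x [y [z [_ [xU yU zU _] [_ -> _ _]]]]].
rewrite !inE -!orbA => /or4P [] /eqP -> /set2P [] -> //; by rewrite ?xU ?yU ?zU.
Qed.

Lemma square_of_inj : {in [set t | corner t] &, injective square_of}.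
Proof.
move=> [[ep1 eq1] w1] [[ep2 eq2] w2]; rewrite !inE => c1 c2 sq12.
have [/andP [/and4P [_ _ lt1 _] _] /andP [/and4P [_ _ lt2 _] /and3P [w2U _ _]]] := (c1, c2).
have [-> ->] : ep1 = ep2 /\ eq1 = eq2.
  apply: (set2_rank_inj (T := {set T}) lt1 lt2).
  by rewrite -(corner_square_rest c1) -(corner_square_rest c2) sq12.
have f2 : w2 |: (ep2 :\: eq2) \in square_of (ep1, eq1, w1) by rewrite sq12 !inE eqxx orbT.
suff -> : w2 = w1 by [].
by apply: (corner_square_outside_U c1 f2 (setU11 _ _)); rewrite -in_setC.
Qed.

Lemma card_straddling_4cycles : #|straddling (@is_4cycle T) E B| = #|[set t | corner t]|.
Proof.
rewrite -(card_in_imset square_of_inj); apply: eq_card => P.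
apply/idP/imsetP => [/straddling_4cycle_corner [t ct ->] | [t]].
  by exists t; rewrite ?inE.
by rewrite inE => ct ->; apply: corner_square_straddling.
Qed.

Lemma num_4cycles_split :
  num_4cycles E = num_4cycles B + num_4cycles (E :\: B) +
    (\sum_(ep in E :\: B)
       \sum_(eq in E :\: B | (enum_rank ep < enum_rank eq)%N && adjacent_edges ep eq)
         nW E (~: U) ep eq)%N.
Proof.
rewrite sum_nW_card_corners -card_straddling_4cycles.
apply: (card_subgraphs_split sBE) => P.
case/existsP=> a /existsP [b /existsP [c /existsP [d /andP [_ /eqP ->]]]].
by apply/set0Pn; exists [set a; b]; rewrite !inE eqxx.
Qed.

End Squares.

Local Open Scope ring_scope.

Theorem theorem4p2 (T : finType) (E EB : {set {set T}}) (U W : {set T}) :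
  simple_graph E -> connected_graph E -> sachs4_minimal E ->
  EB \subset E -> difference_graph EB U W ->
  vertices (E :\: EB) \subset U ->
  a4 E = a4 EB + a4 (E :\: EB)
         + (\sum_(e in E :\: EB) eps_del EB e)%N%:Z
         - 2 * (\sum_(ep in E :\: EB)
                  \sum_(eq in E :\: EB | (enum_rank ep < enum_rank eq)%N
                                         && adjacent_edges ep eq)
                    nW E W ep eq)%N%:Z.
Proof.
move=> E_simple _ _ sBE [dUW cUW B_edges _] rest_in_U.
have B_cross e : e \in EB -> #|e :&: U| = 1 by case/B_edges.
rewrite (setC_of_partition dUW cUW) /a4 (num_2matchings_split sBE).
rewrite (num_4cycles_split E_simple sBE B_cross rest_in_U) !PoszD.
ring.
Qed.
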